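(* For every integer $n\ge 3$, the polytope $\operatorname{conv}\phi_3$ is affinely isomorphic to a face of the polytope $\operatorname{conv}\phi_n$.
   Context: For $n\ge 3$, $\phi_n$ is the set of $\binom{n}{2}\times\binom{n}{2}$ permutation matrices of the edges of the complete graph $K_n$ induced by permutations of its vertices: for a permutation $\sigma$ of $[n]$, the associated vector $\bm{z}\in\{0,1\}^{\binom{n}{2}\times\binom{n}{2}}$ has coordinates $z_{ijkl}$, $i,j,k,l\in[n]$, $i<j$, $k<l$, with $z_{ijkl}=1$ iff $\{\sigma(i),\sigma(j)\}=\{k,l\}$, and $0$ otherwise. Thus $\phi_n$ has $n!$ elements. *)

From HB Require Import structures.
From mathcomp Require Import all_boot all_order all_algebra all_fingroup.
Set Implicit Arguments. Unset Strict Implicit. Unset Printing Implicit Defensive.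
Import Order.TTheory GRing.Theory Num.Theory.
Local Open Scope ring_scope.

(* Edges {i,j} of K_n, encoded as pairs (i,j) with i < j. *)
Definition edge (n : nat) : finType := {e : 'I_n * 'I_n | (e.1 < e.2)%N}.

(* Coordinates z_{ijkl} of R^{binom(n,2) x binom(n,2)}: pairs of edges. *)
Definition ecoord (n : nat) : finType := (edge n * edge n)%type.

Definition zperm (R : realFieldType) (n : nat) (s : 'S_n) (c : ecoord n) : R :=
  if [set s (val c.1).1; s (val c.1).2] == [set (val c.2).1; (val c.2).2]
  then 1 else 0.
Arguments zperm R [n] s c.

Definition conv_phi (R : realFieldType) (n : nat) (x : ecoord n -> R) : Prop :=
  exists lam : 'S_n -> R,
    [/\ forall s, 0 <= lam s,
        \sum_(s : 'S_n) lam s = 1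
      & forall c, x c = \sum_(s : 'S_n) lam s * zperm R s c].
Arguments conv_phi R n x : clear implicits.

Definition is_face (R : realFieldType) (T : finType) (P F : (T -> R) -> Prop) : Prop :=
  exists (a : T -> R) (b : R),
    (forall x, P x -> \sum_(c : T) a c * x c <= b) /\
    (forall x, F x <-> (P x /\ \sum_(c : T) a c * x c = b)).

Definition affmap (R : realFieldType) (T1 T2 : finType)
  (M : T2 -> T1 -> R) (b : T2 -> R) (x : T1 -> R) : T2 -> R :=
  fun c => \sum_(d : T1) M c d * x d + b c.

Definition affinely_isomorphic (R : realFieldType) (T1 T2 : finType)
  (P : (T1 -> R) -> Prop) (Q : (T2 -> R) -> Prop) : Prop :=
  exists (M : T2 -> T1 -> R) (b : T2 -> R),
    [/\ forall x y, P x -> P y -> (forall c, affmap M b x c = affmap M b y c) ->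
                    forall d, x d = y d,
        forall x, P x -> Q (affmap M b x)
      & forall y, Q y -> exists x, P x /\ forall c, affmap M b x c = y c].

(* The vertices z_g of conv phi_n whose permutation g fixes every vertex >= 3
   are exactly those on which the nonnegative coordinates z_{ijkl} with
   j >= 3 and l <> j vanish, so they span a face; these g are the extensions
   of the permutations s of {0, 1, 2}.  Each coordinate of the extended vertex
   is either a coordinate of z_s, a constant, or an indicator [s a = p], and in
   K_3 the latter is again a coordinate of z_s.  Hence one affine map sends
   every z_s to its extension; it is injective on conv phi_3 because it
   copies the coordinates indexed by edges of K_3 inside K_n. *)

From mathcomp Require Import all_boot all_order all_algebra all_fingroup.
From mathcomp Require Import zify.
Set Implicit Arguments. Unset Strict Implicit. Unset Printing Implicit Defensive.
Import Order.TTheory GRing.Theory Num.Theory.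
Local Open Scope ring_scope.

Section ConvexHulls.

Variable R : realFieldType.

(* [conv_phi R n] is convertible to [in_conv (zperm R (n := n))]. *)
Definition in_conv (I T : finType) (v : I -> T -> R) (x : T -> R) : Prop :=
  exists lam : I -> R,
    [/\ forall i, 0 <= lam i, \sum_i lam i = 1 & forall c, x c = \sum_i lam i * v i c].

Lemma in_conv_ge0 (I T : finType) (v : I -> T -> R) x c :
  (forall i c, 0 <= v i c) -> in_conv v x -> 0 <= x c.
Proof.
move=> v_ge0 [lam [lam_ge0 _ ->]].
by apply: sumr_ge0 => i _; apply: mulr_ge0.
Qed.

Lemma in_conv_comp (I J T : finType) (h : I -> J) (v : J -> T -> R) x :
  in_conv (fun i => v (h i)) x -> in_conv v x.
Proof.
move=> [lam [lam_ge0 lam1 xE]].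
pose mu j := \sum_(i | h i == j) lam i.
have muE (f : J -> R) : \sum_j mu j * f j = \sum_i lam i * f (h i).
  rewrite [RHS](partition_big h xpredT) //=; apply: eq_bigr => j _.
  by rewrite big_distrl /=; apply: eq_bigr => i /eqP ->; rewrite mulrC.
exists mu; split=> [j|| c]; first by apply: sumr_ge0.
  by rewrite -lam1 (eq_bigr (fun j => mu j * 1)) => [|j _]; rewrite ?mulr1 // muE;
    apply: eq_bigr => i _; rewrite mulr1.
by rewrite xE muE.
Qed.

Lemma sum_codom_inj (I J : finType) (h : I -> J) (f : J -> R) :
  injective h -> (forall j, j \notin codom h -> f j = 0) ->
  \sum_j f j = \sum_i f (h i).
Proof.
move=> h_inj f0; rewrite (bigID (mem (codom h))) /= [X in _ + X]big1 ?addr0 //.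
rewrite -(big_imset _ (in2W h_inj)) /=; apply: eq_bigl => j.
by apply/codomP/imsetP => [[i ->]|[i _ ->]]; exists i.
Qed.

Lemma in_conv_codom (I J T : finType) (h : I -> J) (v : J -> T -> R) x mu :
  injective h -> (forall j, j \notin codom h -> mu j = 0) ->
  (forall j, 0 <= mu j) -> \sum_j mu j = 1 -> (forall c, x c = \sum_j mu j * v j c) ->
  in_conv (fun i => v (h i)) x.
Proof.
move=> h_inj mu0 mu_ge0 mu1 xE; exists (fun i => mu (h i)); split=> // [|c].
  by rewrite -mu1 (sum_codom_inj h_inj mu0).
by rewrite xE (sum_codom_inj h_inj) // => j /mu0 ->; rewrite mul0r.
Qed.

Lemma affmap_conv_comb (I T1 T2 : finType) (M : T2 -> T1 -> R) b (v : I -> T1 -> R) x lam c :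
  \sum_i lam i = 1 -> (forall d, x d = \sum_i lam i * v i d) ->
  affmap M b x c = \sum_i lam i * affmap M b (v i) c.
Proof.
move=> lam1 xE; rewrite /affmap; under eq_bigr do rewrite xE.
under [RHS]eq_bigr do rewrite mulrDr.
rewrite big_split /= -mulr_suml lam1 mul1r; congr (_ + _).
under eq_bigr do rewrite big_distrr /=.
rewrite exchange_big; apply: eq_bigr => i _.
by rewrite big_distrr; apply: eq_bigr => d _; rewrite mulrCA.
Qed.

Lemma affine_map_of_coords (I T1 T2 : finType) (v : I -> T1 -> R) (w : I -> T2 -> R) (i0 : I) :
  (forall c, (exists d, forall i, w i c = v i d) \/ (forall i, w i c = w i0 c)) ->
  exists M b, forall i c, affmap M b (v i) c = w i c.
Proof.
move=> coords.
pose copy c := [pick d | [forall i, w i c == v i d]].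
exists (fun c d => (copy c == Some d)%:R), (fun c => if copy c is None then w i0 c else 0).
move=> i c; rewrite /affmap /copy; case: pickP => [d /forallP wE | no_copy].
  rewrite (bigD1 d) //= eqxx mul1r big1 => [|d' d'd]; last first.
    by rewrite (_ : (Some d == Some d') = false) ?mul0r //; apply: contraNF d'd => /eqP [->].
  by rewrite !addr0 (eqP (wE i)).
rewrite big1 ?add0r => [|d _]; last by rewrite mul0r.
have [[d wE]|->//] := coords c.
by have /forallP [] := no_copy d; move=> j; rewrite wE.
Qed.

Lemma affinely_isomorphic_conv (I T1 T2 : finType) (v : I -> T1 -> R) (w : I -> T2 -> R)
    M b (e : T1 -> T2) :
  (forall i c, affmap M b (v i) c = w i c) -> (forall i d, w i (e d) = v i d) ->
  affinely_isomorphic (in_conv v) (in_conv w).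
Proof.
move=> Mv we.
have affmap_in_conv x lam : \sum_i lam i = 1 -> (forall d, x d = \sum_i lam i * v i d) ->
    forall c, affmap M b x c = \sum_i lam i * w i c.
  by move=> lam1 xE c; rewrite (affmap_conv_comb M b c lam1 xE); under eq_bigr do rewrite Mv.
have affmap_e x d : in_conv v x -> affmap M b x (e d) = x d.
  move=> [lam [_ lam1 xE]]; rewrite (affmap_in_conv _ _ lam1 xE) xE.
  by under eq_bigr do rewrite we.
exists M, b; split=> [x y x_conv y_conv xy d | x [lam [lam_ge0 lam1 xE]]
                   | y [lam [lam_ge0 lam1 yE]]].
- by rewrite -(affmap_e x) // -(affmap_e y) // xy.
- by exists lam; split=> // c; exact: affmap_in_conv.
- exists (fun d => \sum_i lam i * v i d); split; first by exists lam.
  by move=> c; rewrite yE (affmap_in_conv _ lam).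
Qed.

End ConvexHulls.

Section PermExtension.

Variables m k : nat.

Definition perm_ext_fun (s : 'S_m) (i : 'I_(m + k)) : 'I_(m + k) :=
  if split i is inl j then lshift k (s j) else i.

Lemma perm_ext_fun_inj s : injective (perm_ext_fun s).
Proof.
move=> i j; rewrite /perm_ext_fun.
case: (splitP i) => [i' iE|i' iE]; case: (splitP j) => [j' jE|j' jE] => //.
- by move/lshift_inj/perm_inj => ij; apply: ord_inj; rewrite iE jE ij.
- by move/(congr1 val) => /=; have := ltn_ord (s i'); lia.
- by move/(congr1 val) => /=; have := ltn_ord (s j'); lia.
Qed.

Definition perm_ext s : 'S_(m + k) := perm (@perm_ext_fun_inj s).

Lemma perm_ext_lshift s j : perm_ext s (lshift k j) = lshift k (s j).
Proof. by rewrite permE /perm_ext_fun (unsplitK (inl _ j)). Qed.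

Lemma perm_ext_high s (i : 'I_(m + k)) : (m <= i)%N -> perm_ext s i = i.
Proof.
by rewrite permE /perm_ext_fun; case: splitP => // j ->; rewrite leqNgt ltn_ord.
Qed.

Lemma perm_ext_low s (i : 'I_(m + k)) : (i < m)%N -> (perm_ext s i < m)%N.
Proof.
by rewrite permE /perm_ext_fun; case: splitP => // j _ _ /=; exact: ltn_ord.
Qed.

Lemma perm_ext_inj : injective perm_ext.
Proof.
move=> s t st; apply/permP => j; apply: (@lshift_inj m k).
by rewrite -!perm_ext_lshift st.
Qed.

Definition fixes_high (g : 'S_(m + k)) : Prop :=
  forall i : 'I_(m + k), (m <= i)%N -> g i = i.

Lemma fixes_high_perm_ext s : fixes_high (perm_ext s).
Proof. exact: perm_ext_high. Qed.

Lemma fixes_high_low g (i : 'I_(m + k)) : fixes_high g -> (i < m)%N -> (g i < m)%N.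
Proof.
move=> g_fix i_low; rewrite ltnNge; apply/negP => gi_high.
by move: i_low; rewrite -(perm_inj (g_fix _ gi_high)) ltnNge gi_high.
Qed.

Lemma fixes_highP g : fixes_high g -> g \in codom perm_ext.
Proof.
move=> g_fix.
pose s_fun (j : 'I_m) : 'I_m := Ordinal (@fixes_high_low g (lshift k j) g_fix (ltn_ord j)).
have s_inj : injective s_fun.
  by move=> a b /(congr1 val) /= /val_inj /perm_inj /lshift_inj.
apply/codomP; exists (perm s_inj); apply/permP => i; rewrite permE /perm_ext_fun.
case: splitP => [j iE|j iE].
  by apply: val_inj; rewrite /= permE /= (_ : i = lshift k j) //; apply: ord_inj.
by rewrite g_fix // iE leq_addr.
Qed.

End PermExtension.

Lemma eq_set2_sorted n (u v p q : 'I_n) :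
  (u < v)%N -> (p < q)%N -> ([set u; v] == [set p; q]) = (u == p) && (v == q).
Proof.
move=> uv pq; apply/eqP/andP => [uvE|[/eqP-> /eqP->]] //.
have: u \in [set p; q] by rewrite -uvE set21.
have: v \in [set p; q] by rewrite -uvE set22.
have: p \in [set u; v] by rewrite uvE set21.
rewrite !inE => /orP[]/eqP/(congr1 (@nat_of_ord _)) pE
  /orP[]/eqP/(congr1 (@nat_of_ord _)) vE /orP[]/eqP/(congr1 (@nat_of_ord _)) uE.
all: by split; apply/eqP/ord_inj; lia.
Qed.

Lemma edge_of_neq n (u v : 'I_n) :
  u != v -> exists e : edge n, [set (val e).1; (val e).2] = [set u; v].
Proof.
case: (ltngtP u v) => [uv|vu|/ord_inj->]; last by rewrite eqxx.
- by exists (exist _ (u, v) uv).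
- by exists (exist _ (v, u) vu); rewrite setUC.
Qed.

Lemma zperm_ge0 (R : realFieldType) n (s : 'S_n) c : 0 <= zperm R s c.
Proof. by rewrite /zperm; case: ifP. Qed.

Section ExtendedCoordinates.

Variable R : realFieldType.
Variables m k : nat.

Definition edge_lshift (e : edge m) : edge (m + k) :=
  exist _ (lshift k (val e).1, lshift k (val e).2) (svalP e).

Definition ecoord_lshift (d : ecoord m) : ecoord (m + k) := (edge_lshift d.1, edge_lshift d.2).

Lemma zperm_perm_ext_lshift s d : zperm R (perm_ext k s) (ecoord_lshift d) = zperm R s d.
Proof.
rewrite /zperm /= !perm_ext_lshift.
have set2_lshift (u v : 'I_m) : [set lshift k u; lshift k v] = lshift k @: [set u; v].
  by rewrite imsetU1 imset_set1.
by rewrite !set2_lshift (inj_eq (imset_inj (@lshift_inj m k))).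
Qed.

Lemma edge_lshiftP (e : edge (m + k)) : ((val e).2 < m)%N -> exists e', e = edge_lshift e'.
Proof.
case: e => [[a b] /= ab] b_low; have a_low : (a < m)%N by lia.
exists (exist _ (Ordinal a_low, Ordinal b_low) ab).
by apply: val_inj; congr pair; apply: val_inj.
Qed.

Definition top_moved (c : ecoord (m + k)) : bool :=
  (m <= (val c.1).2)%N && ((val c.2).2 != (val c.1).2).

Lemma zperm_top_moved g c : fixes_high g -> top_moved c -> zperm R g c = 0.
Proof.
case: c => [[[a b] /= ab] [[p q] /= pq]] g_fix /andP[/= b_high qb].
rewrite /zperm /= (g_fix b b_high); case: eqP => // gE; exfalso.
have: b \in [set p; q] by rewrite -gE set22.
have: q \in [set g a; b] by rewrite gE set22.
rewrite !inE (negbTE qb) orbF => /eqP qE /orP[]/eqP bE; last by rewrite bE eqxx in qb.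
have ga_high : (m <= g a)%N by move: pq; rewrite -qE -bE; lia.
have gaE : g a = a := perm_inj (g_fix _ ga_high).
by move: pq; rewrite qE gaE -bE; lia.
Qed.

Lemma fixes_high_of_zperm g : (1 < m)%N ->
  (forall c, top_moved c -> zperm R g c = 0) -> fixes_high g.
Proof.
move=> m_gt1 g_top i i_high; apply/eqP/negPn/negP => gi_i.
have low_to_i (u : 'I_(m + k)) : (u < m)%N -> g u = i.
  move=> u_low; have ui : (u < i)%N by lia.
  have [f fE] : exists f : edge (m + k), [set (val f).1; (val f).2] = [set g u; g i].
    by apply: edge_of_neq; rewrite (inj_eq perm_inj) neq_ltn ui.
  have : zperm R g (exist _ (u, i) ui, f) != 0 by rewrite /zperm /= fE eqxx oner_neq0.
  apply: contraNeq => gu_i; apply/eqP/g_top; rewrite /top_moved /= i_high /=.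
  apply: contra gu_i => /eqP f2_i; have : i \in [set g u; g i] by rewrite -fE -f2_i set22.
  by rewrite !inE (eq_sym i (g i)) (negbTE gi_i) orbF eq_sym.
have m0 : (0 < m + k)%N by lia.
have m1 : (1 < m + k)%N by lia.
have /perm_inj/(congr1 val) // : g (Ordinal m0) = g (Ordinal m1).
by rewrite !low_to_i //=; lia.
Qed.

Lemma top_face_in_conv y : (1 < m)%N ->
  (conv_phi R (m + k) y /\ \sum_c (top_moved c)%:R * y c = 0) <->
  in_conv (fun s => zperm R (perm_ext k s)) y.
Proof.
move=> m_gt1; split=> [[[mu [mu_ge0 mu1 yE]] top0] | y_ext].
  have y_top c : top_moved c -> y c = 0.
    have y_ge0 c' : 0 <= y c'.
      by apply: (in_conv_ge0 (v := fun s => zperm R s)) => [g d|]; [apply: zperm_ge0 | exists mu].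
    have terms_ge0 c' : true -> 0 <= (top_moved c')%:R * y c' by move=> _; apply: mulr_ge0.
    by move=> c_top; have := psumr_eq0P terms_ge0 top0 (i := c) isT; rewrite c_top mul1r.
  apply: (in_conv_codom (@perm_ext_inj m k) _ mu_ge0 mu1 yE) => g g_ext.
  apply/eqP; apply: contraNT g_ext => mu_g; apply/fixes_highP/fixes_high_of_zperm => // c c_top.
  have terms_ge0 g' : true -> 0 <= mu g' * zperm R g' c.
    by move=> _; apply: mulr_ge0 => //; apply: zperm_ge0.
  have /eqP := psumr_eq0P terms_ge0 (etrans (esym (yE c)) (y_top c c_top)) (i := g) isT.
  by rewrite mulf_eq0 (negbTE mu_g) => /eqP.
split; first exact: in_conv_comp y_ext.
apply: big1 => c _; case: (boolP (top_moved c)) => [c_top|_]; last by rewrite mul0r.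
case: y_ext => [lam [_ _ ->]]; rewrite big1 ?mulr0 // => s _.
by rewrite zperm_top_moved ?mulr0 //; apply: fixes_high_perm_ext.
Qed.

Lemma zperm_low_high (g : 'S_(m + k)) (e f : edge (m + k)) :
  (forall i : 'I_(m + k), (i < m)%N -> (g i < m)%N) ->
  ((val e).2 < m)%N -> (m <= (val f).2)%N -> zperm R g (e, f) = 0.
Proof.
move=> g_low e_low f_high; rewrite /zperm /=; case: eqP => // gE; exfalso.
have: (val f).2 \in [set g (val e).1; g (val e).2] by rewrite gE set22.
have := g_low _ e_low; have := g_low _ (ltn_trans (svalP e) e_low).
by rewrite !inE => ga gb /orP[]/eqP fE; move: f_high; rewrite fE leqNgt ?ga ?gb.
Qed.

Lemma zperm_perm_ext_cases c :
  [\/ exists d, forall s, zperm R (perm_ext k s) c = zperm R s d,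
      forall s, zperm R (perm_ext k s) c = zperm R (perm_ext k 1) c
    | exists a p : 'I_m, forall s, zperm R (perm_ext k s) c = (s a == p)%:R].
Proof.
case: c => e f.
have [e_low|e_high] := ltnP (val e).2 m.
  have [f_low|f_high] := ltnP (val f).2 m.
    have [e' ->] := edge_lshiftP e_low; have [f' ->] := edge_lshiftP f_low.
    by constructor 1; exists (e', f') => s; exact: (zperm_perm_ext_lshift s (e', f')).
  by constructor 2 => s; rewrite !zperm_low_high // => i; apply: perm_ext_low.
have [e1_low|e1_high] := ltnP (val e).1 m; last first.
  have e2_high : (m <= (val e).2)%N by have := svalP e; lia.
  by constructor 2 => s; rewrite /zperm !perm_ext_high.
have zE s : zperm R (perm_ext k s) (e, f) =
    ((perm_ext k s (val e).1 == (val f).1) && ((val e).2 == (val f).2))%:R.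
  have se_low := perm_ext_low s e1_low.
  rewrite /zperm /= (perm_ext_high s e_high) eq_set2_sorted ?(svalP f) //.
    by case: (_ && _).
  exact: leq_trans se_low e_high.
have [/andP[f1_low /eqP ef2]|not_point] := boolP (((val f).1 < m)%N && ((val e).2 == (val f).2)).
  constructor 3; exists (Ordinal e1_low), (Ordinal f1_low) => s.
  rewrite zE ef2 eqxx andbT -(inj_eq (@lshift_inj m k)) -perm_ext_lshift.
  by congr ((perm_ext k s _ == _)%:R); apply: ord_inj.
have no_image s : (perm_ext k s (val e).1 == (val f).1) && ((val e).2 == (val f).2) = false.
  by apply: contraNF not_point => /andP[/eqP <- ->]; rewrite perm_ext_low.
by constructor 2 => s; rewrite !zE !no_image.
Qed.

End ExtendedCoordinates.

(* In K_3 the vertex a is mapped to p iff the edge opposite a is mapped to the edge opposite p. *)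
Lemma zperm3_indicator (R : realFieldType) (a p : 'I_3) :
  exists d : ecoord 3, forall s : 'S_3, zperm R s d = (s a == p)%:R.
Proof.
have compl_pair (u v w : 'I_3) : u != v -> w \notin [set u; v] -> [set u; v] = ~: [set w].
  move=> uv w_uv; apply/eqP; rewrite eqEcard cardsC1 card_ord cards2 uv andbT.
  by apply/subsetP => x x_uv; rewrite !inE; apply: contraNneq w_uv => <-.
have compl_edge (u : 'I_3) : exists e : edge 3, [set (val e).1; (val e).2] = ~: [set u].
  have /cards2P [x [y [xy ->]]] : #|~: [set u]| == 2 by rewrite cardsC1 card_ord.
  exact: edge_of_neq.
have [ea eaE] := compl_edge a; have [ep epE] := compl_edge p.
exists (ea, ep) => s; rewrite /zperm /= epE.
have a_notin : a \notin [set (val ea).1; (val ea).2] by rewrite eaE !inE eqxx.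
rewrite (compl_pair _ _ (s a)).
- by rewrite (inj_eq (@setC_inj _)) (inj_eq (@set1_inj _)); case: (_ == _).
- by rewrite (inj_eq perm_inj) neq_ltn (svalP ea).
- by move: a_notin; rewrite !inE !(inj_eq perm_inj).
Qed.

Lemma zperm_perm_ext3_coords (R : realFieldType) k (c : ecoord (3 + k)) :
  (exists d, forall s, zperm R (perm_ext k s) c = zperm R s d) \/
  (forall s, zperm R (perm_ext k s) c = zperm R (perm_ext k 1) c).
Proof.
case: (zperm_perm_ext_cases R c) => [copy|const|[a [p pointE]]]; [left|right|left] => //.
by have [d dE] := zperm3_indicator R a p; exists d => s; rewrite pointE dE.
Qed.

Theorem lemma1 (R : realFieldType) (n : nat) : (3 <= n)%N ->
  exists F : (ecoord n%N -> R) -> Prop,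
    is_face (conv_phi R n%N) F /\ affinely_isomorphic (conv_phi R 3%N) F.
Proof.
move=> n_ge3; have [k ->] : exists k, n = (3 + k)%N by exists (n - 3)%N; lia.
exists (in_conv (fun s => zperm R (perm_ext k s))); split.
  exists (fun c => - (top_moved c)%:R), 0.
  have sumN (y : ecoord (3 + k) -> R) :
      \sum_c - (top_moved c)%:R * y c = - \sum_c (top_moved c)%:R * y c.
    by rewrite -sumrN; under eq_bigr do rewrite mulNr.
  split=> [x x_conv|y].
    rewrite sumN oppr_le0; apply: sumr_ge0 => c _; apply: mulr_ge0 => //.
    by apply: in_conv_ge0 x_conv => s d; apply: zperm_ge0.
  rewrite -top_face_in_conv // sumN; split=> -[y_conv sum0]; split=> //.
    by rewrite sum0 oppr0.
  by rewrite -[LHS]opprK sum0 oppr0.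
have [M [b Mb]] := affine_map_of_coords (v := fun s : 'S_3 => zperm R s)
  (w := fun s => zperm R (perm_ext k s)) (i0 := 1%g) (@zperm_perm_ext3_coords R k).
exact: affinely_isomorphic_conv Mb (@zperm_perm_ext_lshift R 3 k).
Qed.
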